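(* Let $q\geq 1$ and let $M$ be a graph of odd-girth $\ell+2$. Then $\mu^q(M)$ has odd-girth $\ell+2$.
   Context: The odd-girth of a graph is the length of a shortest odd cycle. For a graph $M$ and integer $q\geq1$, $\mu^q(M)$ is the graph obtained from $M$ (whose vertices $v$ are also written $v^0$, with the edges of $M$ kept) by adding, for each vertex $v$ of $M$, new vertices $v^1,\dots,v^q$, and for each $1\leq i\leq q$ joining $v^i$ to $w^{i-1}$ (and, for $i<q$, to $w^{i+1}$) whenever $vw$ is an edge of $M$. *)

From mathcomp Require Import all_boot.
Set Implicit Arguments. Unset Strict Implicit. Unset Printing Implicit Defensive.

(* A (finite simple) graph on a finType T is an edge relation e : rel T that is
   symmetric and irreflexive. *)

Definition is_graph_cycle (T : finType) (e : rel T) (c : seq T) : Prop :=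
  [/\ cycle e c, uniq c & 3 <= size c].

Definition has_odd_girth (T : finType) (e : rel T) (g : nat) : Prop :=
  (exists c, is_graph_cycle e c /\ odd (size c) /\ size c = g) /\
  (forall c, is_graph_cycle e c -> odd (size c) -> g <= size c).

(* mu^q(M): vertices v^i = (v, i) with i in {0..q}; v^0 w^0 adjacent iff vw in M;
   v^i adjacent to w^(i-1) (i >= 1) and to w^(i+1) (i < q) iff vw in M. *)
Definition mu_vertex (T : finType) (q : nat) : finType := (T * 'I_q.+1)%type.

Definition mu_edge (T : finType) (e : rel T) (q : nat) : rel (mu_vertex T q) :=
  fun x y =>
    e x.1 y.1 &&
    [|| (nat_of_ord x.2 == 0) && (nat_of_ord y.2 == 0),
        nat_of_ord x.2 == (nat_of_ord y.2).+1
      | nat_of_ord y.2 == (nat_of_ord x.2).+1].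
Arguments mu_edge : clear implicits.

From mathcomp Require Import all_boot zify.

Set Implicit Arguments.
Unset Strict Implicit.
Unset Printing Implicit Defensive.

(* The projection (v, i) |-> v is a graph homomorphism from mu^q(M) onto M, so
   an odd cycle of mu^q(M) projects to an odd closed walk of M of the same
   length, and an odd closed walk contains an odd cycle no longer than itself.
   Conversely the copy v |-> v^0 of M inside mu^q(M) carries a shortest odd
   cycle of M over unchanged. *)

Lemma not_uniq_split (T : eqType) (s : seq T) :
  ~~ uniq s -> exists x s1 s2 s3, s = s1 ++ x :: s2 ++ x :: s3.
Proof.
elim: s => [//|y s IHs] /=; rewrite negb_and negbK => /orP[/splitPr[s2 s3]|].
  by exists y, [::], s2, s3.
by case/IHs=> x [s1 [s2 [s3 ->]]]; exists x, (y :: s1), s2, s3.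
Qed.

Lemma cycle_split_at_repeat (T : eqType) (e : rel T) c : cycle e c -> ~~ uniq c ->
  exists x s t, [/\ cycle e (x :: s), cycle e (x :: t)
                  & size c = (size s).+1 + (size t).+1].
Proof.
move=> cyc_c /not_uniq_split[x [s1 [s2 [s3 def_c]]]]; move: cyc_c; rewrite def_c.
rewrite (cycle_catC e s1) /= -catA /= rcons_cat cat_path /= => /and3P[p2 e2 p3].
exists x, s2, (s3 ++ s1); split=> //; first by rewrite /= rcons_path p2.
by rewrite !size_cat /= size_cat /=; lia.
Qed.

Section ClosedWalks.

Variables (T : finType) (e : rel T).
Hypothesis e_irr : irreflexive e.

Lemma odd_closed_walk_odd_cycle c : cycle e c -> odd (size c) ->
  exists2 c', is_graph_cycle e c' & odd (size c') && (size c' <= size c).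
Proof.
have [n] := ubnP (size c); elim: n c => // n IHn c lt_c_n cyc_c odd_c.
have [uniq_c | /(cycle_split_at_repeat cyc_c) [x [s [t [cyc_s cyc_t size_c]]]]] :=
  boolP (uniq c).
  exists c; rewrite ?odd_c ?leqnn //; split=> //.
  by case: c cyc_c odd_c {lt_c_n uniq_c} => [|x [|y [|z c]]] //=; rewrite e_irr.
wlog odd_s : s t cyc_s cyc_t size_c / odd (size (x :: s)).
  move=> hwlog; have [odd_s | even_s] := boolP (odd (size (x :: s))).
    exact: hwlog s t cyc_s cyc_t size_c odd_s.
  apply: (hwlog t s cyc_t cyc_s); first by rewrite size_c addnC.
  by move: odd_c; rewrite size_c oddD (negPf even_s).
have [|c' gc /andP[odd_c' le_c']] := IHn _ _ cyc_s odd_s.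
  by rewrite -ltnS (leq_trans _ lt_c_n) // size_c addnS ltnS leq_addr.
by exists c'; rewrite // odd_c' (leq_trans le_c') // size_c leq_addr.
Qed.

End ClosedWalks.

Section Homomorphisms.

Variables (T U : finType) (e : rel T) (e' : rel U) (f : T -> U).
Hypothesis f_hom : forall x y, e x y -> e' (f x) (f y).

Lemma cycle_hom c : cycle e c -> cycle e' (map f c).
Proof. by rewrite cycle_map; apply: sub_cycle => x y /f_hom. Qed.

Lemma graph_cycle_inj_hom c : injective f ->
  is_graph_cycle e c -> is_graph_cycle e' (map f c).
Proof.
by move=> f_inj [cyc_c uniq_c size_c]; split; rewrite ?cycle_hom ?map_inj_uniq ?size_map.
Qed.

Lemma odd_girth_lb_hom g : irreflexive e' ->
  (forall c, is_graph_cycle e' c -> odd (size c) -> g <= size c) ->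
  forall c, is_graph_cycle e c -> odd (size c) -> g <= size c.
Proof.
move=> e'_irr lb c [cyc_c _ _] odd_c.
have [|c' gc /andP[odd_c' le_c']] := odd_closed_walk_odd_cycle e'_irr (cycle_hom cyc_c).
  by rewrite size_map.
by rewrite (leq_trans (lb c' gc odd_c')) // -(size_map f).
Qed.

End Homomorphisms.

Theorem lemma5 (T : finType) (e : rel T) (q l : nat) :
  symmetric e -> irreflexive e -> 1 <= q ->
  has_odd_girth e (l + 2) ->
  has_odd_girth (mu_edge T e q) (l + 2).
Proof.
move=> _ e_irr _ [[c [gc [odd_c size_c]]] lb]; split.
  exists (map (fun v => (v, ord0)) c); rewrite size_map; split=> //.
  apply: graph_cycle_inj_hom gc => [x y exy | x y [] //].
  by rewrite /mu_edge /= exy.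
by apply: (odd_girth_lb_hom (f := fst)) lb => // x y /andP[].
Qed.
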